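(* Let $n\ge 3$ and $1\le i\le n-2$ be integers, and let $\mathcal{A}=\{A_1,\dots,A_n\}$ with $A_1=\dots=A_i=[n]$, $A_{i+1}=\dots=A_{n-1}=[n]\setminus[i]$, $A_n=[n]$. Let $$A=\{\log(x_{j_1}x_{j_2}\cdots x_{j_n}) \mid j_k\in A_k \text{ for all } 1\le k\le n\}\subset\mathbb{N}^n$$ be the exponent set of the monomial generators of $K[\mathcal{A}]$. Then the cone $\mathbb{R}_+A$ has dimension $n$ and has the irreducible representation $$\mathbb{R}_+A=\bigcap_{a\in N}H_a^+,\qquad N=\{\nu_{[i]}\}\cup\{e_1,\dots,e_n\},$$ where $\nu_{[i]}=(-(n-i-1),\dots,-(n-i-1),\,i+1,\dots,i+1)\in\mathbb{Z}^n$ has its first $i$ entries equal to $-(n-i-1)$ and its last $n-i$ entries equal to $i+1$. Equivalently, $\mathbb{R}_+A=\{x\in\mathbb{R}^n \mid x_k\ge 0 \text{ for all } k,\ -(n-i-1)\sum_{k=1}^i x_k+(i+1)\sum_{k=i+1}^n x_k\ge 0\}$, and none of these $n+1$ half-spaces can be omitted. *)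

(* Indices 1..n of the paper are 'I_n = {0..n-1} here. *)
From HB Require Import structures.
From mathcomp Require Import all_boot all_order all_algebra.
Unset Strict Implicit. Unset Printing Implicit Defensive.
Import Order.TTheory GRing.Theory Num.Theory.
Local Open Scope ring_scope.

(* A choice sequence (j_1,...,j_n) is a function f : 'I_n -> 'I_n (k |-> j_k).
   It is admissible iff j_k \in A_k for all k, where (0-based)
   A_k = [n] for k < i and for k = n-1, and A_k = [n] \ [i] for i <= k < n-1. *)
Definition adm (n i : nat) (f : {ffun 'I_n -> 'I_n}) : bool :=
  [forall k : 'I_n, ((i <= k)%N && (k < n.-1)%N) ==> (i <= f k)%N].

(* log(x_{j_1} ... x_{j_n}) : the exponent vector, whose j-th entry is the
   number of positions k with j_k = j. *)
Definition expvec (R : realFieldType) (n : nat) (f : {ffun 'I_n -> 'I_n}) : 'rV[R]_n :=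
  \row_(j < n) (#|[set k | f k == j]|)%:R.

Definition in_cone (R : realFieldType) (n i : nat) (x : 'rV[R]_n) : Prop :=
  exists c : {ffun {ffun 'I_n -> 'I_n} -> R},
    (forall f, 0 <= c f) /\
    x = \sum_(f | adm n i f) c f *: expvec R n f.

(* The linear span of A (= linear span of the cone R_+ A); its rank is the
   dimension of the cone. *)
Definition cone_span (R : realFieldType) (n i : nat) :=
  (\sum_(f | adm n i f) <<expvec R n f>>)%MS.

Definition nu (R : realFieldType) (n i : nat) : 'rV[R]_n :=
  \row_(j < n) (if (j < i)%N then - ((n - i - 1)%N%:R) else (i + 1)%N%:R).

Definition normals (R : realFieldType) (n i : nat) (t : option 'I_n) : 'rV[R]_n :=
  match t with
  | None => nu R n i
  | Some k => delta_mx 0 k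
  end.

Definition halfspace (R : realFieldType) (n : nat) (a x : 'rV[R]_n) : Prop :=
  0 <= \sum_(j < n) a 0 j * x 0 j.

From HB Require Import structures.
From mathcomp Require Import all_boot all_order all_algebra zify ring.
Import Order.TTheory GRing.Theory Num.Theory.
Local Open Scope ring_scope.

(* Proof of Lemma 4.1.  Put m = n-1-i (the number of restricted positions
   i <= k < n-1) and, for p arbitrary and q >= i,
     w(p,q) = m e_q + (i+1) e_p,
   the exponent vector of the choice sequence taking the value q on the
   restricted positions and p elsewhere.
   1. R_+A is a convex cone containing every w(p,q), hence also every e_q
      with q >= i (average w(q,q) = n e_q).
   2. Every generator lies in all the half-spaces: <e_k,-> is a count, and
      in <nu,-> each restricted position contributes i+1 while each of the
      other i+1 positions contributes at least -m.
   3. Conversely let x >= 0 with <nu,x> >= 0, i.e. m S_lo <= (i+1) S_hi for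
      the coordinate masses below and above i.  The polynomial identity
        (i+1) S_hi x = sum_{p<i<=q} x_p x_q w(p,q)
                       + sum_{q>=i} ((i+1) S_hi - m S_lo) x_q e_q
      exhibits (i+1) S_hi x in the cone; divide if S_hi > 0, and note x = 0
      if S_hi = 0.
   4. The span contains the e_q (q >= i) and the w(p,q), hence every e_p.
   5. Each of the n+1 inequalities is violated by an explicit point that
      satisfies the n others, so none is redundant. *)

Definition dot {R : realFieldType} {n : nat} (a x : 'rV[R]_n) : R :=
  \sum_(j < n) a 0 j * x 0 j.

Lemma halfspaceE (R : realFieldType) n (a x : 'rV[R]_n) :
  halfspace R n a x = (0 <= dot a x).
Proof. by []. Qed.

Lemma dotC (R : realFieldType) n (a x : 'rV[R]_n) : dot a x = dot x a.
Proof. by apply: eq_bigr => j _; rewrite mulrC. Qed.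

Lemma dotD (R : realFieldType) n (a x y : 'rV[R]_n) :
  dot a (x + y) = dot a x + dot a y.
Proof. by rewrite /dot -big_split; apply: eq_bigr => j _; rewrite mxE mulrDr. Qed.

Lemma dotZ (R : realFieldType) n (a x : 'rV[R]_n) c : dot a (c *: x) = c * dot a x.
Proof. by rewrite /dot mulr_sumr; apply: eq_bigr => j _; rewrite mxE mulrCA. Qed.

Lemma dotN (R : realFieldType) n (a x : 'rV[R]_n) : dot a (- x) = - dot a x.
Proof. by rewrite -scaleN1r dotZ mulN1r. Qed.

Lemma dot_sum (R : realFieldType) n (a : 'rV[R]_n) (I : finType) (P : pred I)
    (F : I -> 'rV[R]_n) :
  dot a (\sum_(k | P k) F k) = \sum_(k | P k) dot a (F k).
Proof.
apply: (big_morph (dot a)); first by move=> x y; rewrite dotD.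
by rewrite /dot big1 // => j _; rewrite mxE mulr0.
Qed.

Lemma dot_e (R : realFieldType) n (a : 'rV[R]_n) k : dot a 'e_k = a 0 k.
Proof.
rewrite /dot (bigD1 k) //= big1 => [|j jk]; first by rewrite mxE !eqxx mulr1 addr0.
by rewrite mxE (negbTE jk) andbF mulr0.
Qed.

Lemma sum_restricted {V : nmodType} {n i : nat} (a b : V) : (i < n.-1)%N ->
  \sum_(k < n) (if ((i <= k) && (k < n.-1))%N then a else b)
  = a *+ (n.-1 - i) + b *+ i.+1.
Proof.
case: n => [|m] //= hi.
rewrite -(big_mkord xpredT (fun k => if ((i <= k) && (k < m))%N then a else b)).
rewrite (@big_cat_nat _ _ _ i) //=; last by lia.
rewrite (@big_cat_nat _ _ _ m i) //=; last by lia.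
rewrite big_nat1 ltnn andbF.
rewrite (eq_big_nat _ _ (F2 := fun=> b)) => [|k /andP[_ hk]]; last by rewrite leqNgt hk.
rewrite [X in _ + (X + _)](eq_big_nat _ _ (F2 := fun=> a)) => [|k /andP[-> ->]] //.
by rewrite !sumr_const_nat subn0 addrA [b *+ i + _]addrC -addrA -mulrSr.
Qed.

Lemma expvec_sum (R : realFieldType) n (f : {ffun 'I_n -> 'I_n}) :
  expvec R n f = \sum_(k < n) 'e_(f k).
Proof.
apply/rowP => j; rewrite !mxE summxE -sum1_card natr_sum big_mkcond /=.
by apply: eq_bigr => k _; rewrite !mxE inE eqxx eq_sym; case: eqP.
Qed.

Lemma sum_pairs (R : realFieldType) n (P Q : pred 'I_n) (c : 'I_n -> 'I_n -> R)
    (m k : nat) :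
  \sum_(p | P p) \sum_(q | Q q) c p q *: (('e_q : 'rV[R]_n) *+ m + 'e_p *+ k)
  = \sum_(p | P p) (\sum_(q | Q q) c p q * k%:R) *: ('e_p : 'rV[R]_n)
    + \sum_(q | Q q) (\sum_(p | P p) c p q * m%:R) *: ('e_q : 'rV[R]_n).
Proof.
under eq_bigr => p _ do under eq_bigr => q _ do rewrite scalerDr -!scaler_nat !scalerA.
under eq_bigr => p _ do rewrite big_split /=.
rewrite big_split /= addrC; congr (_ + _).
  by apply: eq_bigr => p _; rewrite scaler_suml.
by rewrite exchange_big /=; apply: eq_bigr => q _; rewrite scaler_suml.
Qed.

Section Cone.
Variables (R : realFieldType) (n i : nat).

Lemma cone0 : in_cone R n i 0.
Proof.
exists [ffun=> 0]; split=> [f|]; first by rewrite ffunE.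
by rewrite big1 // => f _; rewrite ffunE scale0r.
Qed.

Lemma coneD (x y : 'rV[R]_n) : in_cone R n i x -> in_cone R n i y -> in_cone R n i (x + y).
Proof.
move=> [c [c0 ->]] [d [d0 ->]].
exists [ffun f => c f + d f]; split=> [f|]; first by rewrite ffunE addr_ge0.
by rewrite -big_split; apply: eq_bigr => f _; rewrite ffunE scalerDl.
Qed.

Lemma coneZ a (x : 'rV[R]_n) : 0 <= a -> in_cone R n i x -> in_cone R n i (a *: x).
Proof.
move=> a0 [c [c0 ->]].
exists [ffun f => a * c f]; split=> [f|]; first by rewrite ffunE mulr_ge0.
by rewrite scaler_sumr; apply: eq_bigr => f _; rewrite ffunE scalerA.
Qed.

Lemma cone_sum (I : finType) (P : pred I) (F : I -> 'rV[R]_n) :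
  (forall k, P k -> in_cone R n i (F k)) -> in_cone R n i (\sum_(k | P k) F k).
Proof. by move=> H; apply: big_ind => //; [exact: cone0 | exact: coneD]. Qed.

Lemma cone_gen f : adm n i f -> in_cone R n i (expvec R n f).
Proof.
move=> hf; exists [ffun g => (g == f)%:R]; split=> [g|]; first by rewrite ffunE ler0n.
rewrite (bigD1 f) //= big1 => [|g /andP[_ gf]]; first by rewrite ffunE eqxx scale1r addr0.
by rewrite ffunE (negbTE gf) scale0r.
Qed.

Lemma cone_sub_span {x : 'rV[R]_n} : in_cone R n i x -> (x <= cone_span R n i)%MS.
Proof.
move=> [c [_ ->]]; apply: summx_sub => f hf; apply: scalemx_sub.
by apply: (sumsmx_sup f) => //; rewrite genmxE.
Qed.

Hypothesis hi : (i < n.-1)%N.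

Definition wgen (p q : 'I_n) : 'rV[R]_n := 'e_q *+ (n.-1 - i) + 'e_p *+ i.+1.

Lemma cone_wgen (p q : 'I_n) : (i <= q)%N -> in_cone R n i (wgen p q).
Proof.
move=> hq; pose f := [ffun k : 'I_n => if ((i <= k) && (k < n.-1))%N then q else p].
have -> : wgen p q = expvec R n f.
  rewrite expvec_sum /wgen -(sum_restricted _ _ hi).
  by apply: eq_bigr => k _; rewrite ffunE; case: ifP.
by apply: cone_gen; apply/forallP => k; apply/implyP => hk; rewrite ffunE hk.
Qed.

Lemma cone_e (q : 'I_n) : (i <= q)%N -> in_cone R n i 'e_q.
Proof.
move=> hq; have hn : (n.-1 - i + i.+1 = n)%N by lia.
have -> : 'e_q = (n%:R)^-1 *: wgen q q.
  by rewrite /wgen -mulrnDr hn -scaler_nat scalerA mulVf ?scale1r // pnatr_eq0; lia.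
by apply: coneZ; [rewrite invr_ge0 ler0n | exact: cone_wgen].
Qed.

Lemma nu_expvec_ge0 f : adm n i f -> 0 <= dot (nu R n i) (expvec R n f).
Proof.
move=> hf; rewrite expvec_sum dot_sum.
under eq_bigr => k _ do rewrite dot_e.
apply: (@le_trans _ _ (\sum_(k < n) (if ((i <= k) && (k < n.-1))%N then i.+1%:R
                                     else - (n.-1 - i)%:R : R))).
  by rewrite sum_restricted // mulNrn -!mulrnA mulnC subrr.
apply: ler_sum => k _; rewrite mxE (_ : (n - i - 1 = n.-1 - i)%N) ?addn1; last by lia.
case: ifP => hk.
  by move/forallP: hf => /(_ k) /implyP /(_ hk); rewrite leqNgt => /negbTE ->.
by case: ifP => _ //; rewrite (le_trans _ (ler0n _ _)) // oppr_le0 ler0n.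
Qed.

Lemma cone_in_halfspaces (x : 'rV[R]_n) t :
  in_cone R n i x -> halfspace R n (normals R n i t) x.
Proof.
move=> [c [c0 ->]]; rewrite halfspaceE dot_sum.
apply: sumr_ge0 => f hf; rewrite dotZ mulr_ge0 //.
by case: t => [k|] /=; [rewrite dotC dot_e mxE ler0n | exact: nu_expvec_ge0].
Qed.

Definition low_mass (x : 'rV[R]_n) : R := \sum_(j : 'I_n | (j < i)%N) x 0 j.
Definition high_mass (x : 'rV[R]_n) : R := \sum_(j : 'I_n | ~~ (j < i)%N) x 0 j.

Lemma dot_nu (x : 'rV[R]_n) :
  dot (nu R n i) x = i.+1%:R * high_mass x - (n.-1 - i)%:R * low_mass x.
Proof.
rewrite /dot (bigID (fun j : 'I_n => (j < i)%N)) /= addrC; congr (_ + _).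
  by rewrite mulr_sumr; apply: eq_bigr => j hj; rewrite mxE (negbTE hj) addn1.
rewrite mulr_sumr -sumrN; apply: eq_bigr => j hj.
by rewrite mxE hj mulNr (_ : (n - i - 1 = n.-1 - i)%N) //; lia.
Qed.

Lemma split_low_high (x : 'rV[R]_n) :
  x = \sum_(p : 'I_n | (p < i)%N) x 0 p *: ('e_p : 'rV[R]_n)
      + \sum_(q : 'I_n | ~~ (q < i)%N) x 0 q *: ('e_q : 'rV[R]_n).
Proof. by rewrite [LHS]row_sum_delta (bigID (fun j : 'I_n => (j < i)%N)). Qed.

Lemma scaled_decomposition (x : 'rV[R]_n) :
  (i.+1%:R * high_mass x) *: x
  = \sum_(p : 'I_n | (p < i)%N) \sum_(q : 'I_n | ~~ (q < i)%N)
        (x 0 p * x 0 q) *: wgen p q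
    + \sum_(q : 'I_n | ~~ (q < i)%N)
        ((i.+1%:R * high_mass x - (n.-1 - i)%:R * low_mass x) * x 0 q)
          *: ('e_q : 'rV[R]_n).
Proof.
rewrite sum_pairs -addrA -big_split /= [X in _ *: X = _]split_low_high scalerDr.
rewrite !scaler_sumr; congr (_ + _); apply: eq_bigr => j _; rewrite scalerA.
  by congr (_ *: _); rewrite -mulr_suml -mulr_sumr -/(high_mass x); ring.
by rewrite -scalerDl; congr (_ *: _); rewrite -!mulr_suml -/(low_mass x); ring.
Qed.

Lemma massless_eq0 (x : 'rV[R]_n) : (forall k, 0 <= x 0 k) ->
  low_mass x = 0 -> high_mass x = 0 -> x = 0.
Proof.
move=> x0 lo0 hi0; apply/rowP => j; rewrite mxE.
have [hj|hj] := boolP (j < i)%N.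
  by rewrite (psumr_eq0P (fun k _ => x0 k) lo0).
by rewrite (psumr_eq0P (fun k _ => x0 k) hi0).
Qed.

Lemma scaled_in_cone (x : 'rV[R]_n) : (forall k, 0 <= x 0 k) ->
  (n.-1 - i)%:R * low_mass x <= i.+1%:R * high_mass x ->
  in_cone R n i ((i.+1%:R * high_mass x) *: x).
Proof.
move=> x0 hnu; rewrite scaled_decomposition; apply: coneD; apply: cone_sum => p hp.
  apply: cone_sum => q hq; apply: coneZ; first exact: mulr_ge0.
  by apply: cone_wgen; rewrite leqNgt.
by apply: coneZ; [rewrite mulr_ge0 // subr_ge0 | apply: cone_e; rewrite leqNgt].
Qed.

Lemma halfspaces_in_cone (x : 'rV[R]_n) :
  (forall t, halfspace R n (normals R n i t) x) -> in_cone R n i x.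
Proof.
move=> H.
have x0 k : 0 <= x 0 k by have := H (Some k); rewrite halfspaceE dotC dot_e.
have hnu : (n.-1 - i)%:R * low_mass x <= i.+1%:R * high_mass x.
  by have := H None; rewrite halfspaceE dot_nu subr_ge0.
have lo0 : 0 <= low_mass x by apply: sumr_ge0.
have hi0 : 0 <= high_mass x by apply: sumr_ge0.
have [hi_eq0|hi_neq0] := eqVneq (high_mass x) 0.
  have lo_eq0 : low_mass x = 0.
    apply/eqP; rewrite eq_le lo0 andbT -(@pmulr_rle0 _ (n.-1 - i)%:R); last by rewrite ltr0n; lia.
    by rewrite (le_trans hnu) // hi_eq0 mulr0.
  by rewrite (massless_eq0 x x0 lo_eq0 hi_eq0); exact: cone0.
have hpos : i.+1%:R * high_mass x != 0 by rewrite mulf_neq0 // pnatr_eq0.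
rewrite -[x](scalerK hpos); apply: coneZ; last exact: scaled_in_cone.
by rewrite invr_ge0 mulr_ge0.
Qed.

Lemma rank_cone_span : \rank (cone_span R n i) = n.
Proof.
have hq0 : (i < n)%N by lia.
pose q0 := Ordinal hq0.
have e_span (j : 'I_n) : (('e_j : 'rV[R]_n) <= cone_span R n i)%MS.
  have [hj|hj] := leqP i j; first exact: cone_sub_span (cone_e j hj).
  have -> : ('e_j : 'rV[R]_n) = (i.+1%:R)^-1 *: (wgen j q0 - 'e_q0 *+ (n.-1 - i)).
    by rewrite /wgen addrC addKr -scaler_nat scalerA mulVf ?scale1r // pnatr_eq0.
  apply/scalemx_sub/addmx_sub; first exact: cone_sub_span (cone_wgen j q0 (leqnn i)).
  by rewrite -scaler_nat -scaleNr; apply/scalemx_sub/cone_sub_span/cone_e.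
apply/eqP; change (row_full (cone_span R n i)); rewrite -sub1mx.
by apply/row_subP => j; rewrite row1; exact: e_span.
Qed.

Lemma violation_not_in_cone (x : 'rV[R]_n) t :
  dot (normals R n i t) x < 0 -> ~ in_cone R n i x.
Proof. by move=> hlt /(cone_in_halfspaces _ t); rewrite halfspaceE leNgt hlt. Qed.

Definition irredundancy_witness (t : option 'I_n) (x : 'rV[R]_n) : Prop :=
  (forall s, s != t -> halfspace R n (normals R n i s) x) /\ ~ in_cone R n i x.

Lemma delta_off (j k : 'I_n) : j != k -> ('e_j : 'rV[R]_n) 0 k = 0.
Proof. by move=> hjk; rewrite mxE eq_sym (negbTE hjk) andbF. Qed.

(* For nu: any e_k with k < i, on which nu takes the value -(n-i-1) < 0. *)
Lemma witness_nu (k : 'I_n) : (k < i)%N -> irredundancy_witness None 'e_k.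
Proof.
move=> hk; split=> [[s|] // _|]; first by rewrite halfspaceE dotC dot_e mxE ler0n.
apply: (violation_not_in_cone _ None); rewrite dot_e mxE hk oppr_lt0 ltr0n; lia.
Qed.

Lemma witness_low (k : 'I_n) : (k < i)%N -> irredundancy_witness (Some k) (- 'e_k).
Proof.
move=> hk; split=> [[s|] hs|].
- by rewrite halfspaceE dotN dot_e /= delta_off ?oppr0 //; apply: contraNneq hs => ->.
- by rewrite halfspaceE dotN dot_e mxE hk opprK ler0n.
apply: (violation_not_in_cone _ (Some k)).
by rewrite dotN dot_e mxE !eqxx oppr_lt0 ltr01.
Qed.

(* For e_k with k >= i: the vector e_l - e_k for another index l >= i, which
   exists since there are n - i >= 2 such indices; nu vanishes on it. *)
Lemma other_high_index (k : 'I_n) : exists2 l : 'I_n, (i <= l)%N & l != k.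
Proof.
have hl1 : (n.-1 < n)%N by lia.
have hl2 : (n.-2 < n)%N by lia.
have [hk|hk] := eqVneq (Ordinal hl1) k.
  by exists (Ordinal hl2); [rewrite /=; lia | rewrite -hk; apply/eqP => -[]; lia].
by exists (Ordinal hl1) => //=; lia.
Qed.

Lemma witness_high (k : 'I_n) : (i <= k)%N ->
  exists x, irredundancy_witness (Some k) x.
Proof.
move=> hk; have [l hl hlk] := other_high_index k.
exists ('e_l - 'e_k); split=> [[s|] hs|].
- by rewrite halfspaceE dotD dotN !dot_e /= (@delta_off s k) ?subr0 ?mxE ?ler0n.
- by rewrite halfspaceE dotD dotN !dot_e !mxE ltnNge hl ltnNge hk subrr.
apply: (violation_not_in_cone _ (Some k)).
by rewrite dotD dotN !dot_e /= delta_off 1?eq_sym // mxE !eqxx add0r oppr_lt0 ltr01.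
Qed.

End Cone.

Theorem lemma4p1 (R : realFieldType) (n i : nat)
  (hn : (3 <= n)%N) (hi1 : (1 <= i)%N) (hi2 : (i <= n - 2)%N) :
  \rank (cone_span R n i) = n /\
  (forall x : 'rV[R]_n,
     in_cone R n i x <-> (forall t : option 'I_n, halfspace R n (normals R n i t) x)) /\
  (forall t : option 'I_n, exists x : 'rV[R]_n,
     (forall s : option 'I_n, s != t -> halfspace R n (normals R n i s) x) /\
     ~ in_cone R n i x).
Proof.
have hi : (i < n.-1)%N by lia.
split; first exact: rank_cone_span.
split=> [x|[k|]].
- by split=> [hx t|]; [exact: cone_in_halfspaces | exact: halfspaces_in_cone].
- have [hk|hk] := ltnP k i; last exact: witness_high.
  by exists (- 'e_k); exact: witness_low.
- have h0 : (0 < n)%N by lia.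
  by exists 'e_(Ordinal h0); apply: witness_nu.
Qed.
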